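(* Let $G<\mathrm{Aut}(\mathbf{T})$ be finitely generated and fix a generating $n$-tuple $S\in\Gamma_n(G)$. Suppose $G$ acts transitively on every level $\{0,1\}^m$ of $\mathbf{T}$. Suppose there is a constant $\alpha$ such that for every $m\ge1$ there exist a string $s\in\{0,1\}^m$ and a nontrivial element $g\in\mathrm{Rist}_G(s)$ with $\ell_S(g)\le\alpha 2^m$. Then $\Gamma_k(G,S)$ has exponential growth for every $k\ge n+2$.
   Context: $\mathbf{T}=\{0,1\}^*$ is the rooted binary tree of finite binary strings (root the empty string, children of $s$ being $s0,s1$), and $\mathrm{Aut}(\mathbf{T})$ is its automorphism group (length-preserving bijections $g$ of strings such that $g(st)$ begins with $g(s)$). For $s\in\{0,1\}^m$, $\mathrm{Rist}(s)$ is the subgroup of elements of $\mathrm{Aut}(\mathbf{T})$ fixing every string that does not begin with $s$, and $\mathrm{Rist}_G(s)=G\cap\mathrm{Rist}(s)$. $\ell_S(g)$ denotes the word length of $g$ with respect to the entries of $S$ and their inverses. For a group $G$, a generating $n$-tuple is $(g_1,\dots,g_n)\in G^n$ generating $G$; the product replacement graph $\Gamma_n(G)$ has vertices the generating $n$-tuples, with edges from $(g_1,\dots,g_n)$ to each tuple obtained by replacing $g_j$ by $g_jg_i^{\pm1}$ or $g_i^{\pm1}g_j$, for every ordered pair $i\neq j$. For $S=(g_1,\dots,g_n)$ and $k\ge n$, $\Gamma_k(G,S)$ is the connected component of $\Gamma_k(G)$ containing $(g_1,\dots,g_n,1,\dots,1)$. A connected graph has exponential growth if for some vertex $v$ there is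 $\beta>1$ such that the number of vertices at distance at most $r$ from $v$ is at least $\beta^r$ for all sufficiently large $r$. *)

From Stdlib Require Import Reals List Arith.
Import ListNotations.

Definition str := list bool.
Definition fn := str -> str.

(* An element of Aut(T) is represented by (g, g^{-1}). *)
Definition Aut := (fn * fn)%type.

Definition is_aut (a : Aut) : Prop :=
  (forall s, snd a (fst a s) = s) /\
  (forall s, fst a (snd a s) = s) /\
  (forall s, length (fst a s) = length s) /\
  (forall s t, exists u, fst a (s ++ t) = fst a s ++ u).

Definition mul (a b : Aut) : Aut :=
  (fun x => fst a (fst b x), fun x => snd b (snd a x)).
Definition inv (a : Aut) : Aut := (snd a, fst a).
Definition one : Aut := (fun x => x, fun x => x).

Definition letter (T : list Aut) (p : nat * bool) : Aut :=
  if snd p then nth (fst p) T one else inv (nth (fst p) T one).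

Definition eval (T : list Aut) (w : list (nat * bool)) : Aut :=
  fold_right (fun p acc => mul (letter T p) acc) one w.

Definition valid_word (T : list Aut) (w : list (nat * bool)) : Prop :=
  Forall (fun p => fst p < length T) w.

Definition generated (T : list Aut) (g : Aut) : Prop :=
  exists w, valid_word T w /\ eval T w = g.

Definition word_length_le (T : list Aut) (g : Aut) (x : R) : Prop :=
  exists w, valid_word T w /\ (INR (length w) <= x)%R /\ eval T w = g.

Definition level_transitive (G : Aut -> Prop) : Prop :=
  forall m (s t : str), length s = m -> length t = m ->
    exists g, G g /\ fst g s = t.

Definition in_rist (s : str) (g : Aut) : Prop :=
  forall u, ~ (exists v, u = s ++ v) -> fst g u = u.

Definition vertex (G : Aut -> Prop) (k : nat) (T : list Aut) : Prop :=
  length T = k /\ (forall x, In x T -> G x) /\ (forall g, G g -> generated T g).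

Fixpoint set_nth {A} (l : list A) (j : nat) (x : A) : list A :=
  match l, j with
  | [], _ => []
  | _ :: t, 0 => x :: t
  | h :: t, S j' => h :: set_nth t j' x
  end.

Definition step (k : nat) (T T' : list Aut) : Prop :=
  exists i j, i < k /\ j < k /\ i <> j /\
    (T' = set_nth T j (mul (nth j T one) (nth i T one)) \/
     T' = set_nth T j (mul (nth j T one) (inv (nth i T one))) \/
     T' = set_nth T j (mul (nth i T one) (nth j T one)) \/
     T' = set_nth T j (mul (inv (nth i T one)) (nth j T one))).

Definition adj (G : Aut -> Prop) (k : nat) (T T' : list Aut) : Prop :=
  vertex G k T /\ vertex G k T' /\ (step k T T' \/ step k T' T).

Fixpoint within (G : Aut -> Prop) (k r : nat) (v w : list Aut) : Prop :=
  match r with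
  | 0 => v = w
  | S r' => within G k r' v w \/ exists u, within G k r' v u /\ adj G k u w
  end.

Definition component_exp_growth (G : Aut -> Prop) (k : nat) (v0 : list Aut) : Prop :=
  exists v, vertex G k v /\ (exists r, within G k r v0 v) /\
    exists beta : R, (1 < beta)%R /\ exists R0 : nat, forall r, R0 <= r ->
      exists l : list (list Aut), NoDup l /\
        (forall T, In T l -> within G k r v T) /\
        (beta ^ r <= INR (length l))%R.

(** Let [g] be a nontrivial element of [Rist_G(s)] of length about [2^m].  The two
    spare coordinates of a tuple are used as a register [y] and a carrier [z]:
    first [z] is set to [g] letter by letter; then [z] is moved along a walk in the
    Schreier graph of level [m] that visits all [2^m] vertices, being conjugated by
    one generator per edge, so that at a vertex [v] it is a nontrivial element of
    [Rist(v)].  At each visited vertex we may or may not multiply [y] by [z].  The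
    rigid stabilizers of distinct vertices of one level have disjoint supports, so
    the [2^(2^m)] possible choices give pairwise distinct registers [y], all within
    distance [c 2^m] of the starting tuple; hence balls of radius [r] contain at
    least [2^(r/2c)] tuples. *)

From Stdlib Require Import Reals List Arith Lia Lra ZArith Classical
  FunctionalExtensionality PropExtensionality.
From Stdlib Require FinFun.
Import ListNotations.

Definition prefix (a u : str) : Prop := exists t, u = a ++ t.

Lemma app_inv_length (a b t u : str) :
  length a = length b -> a ++ t = b ++ u -> a = b.
Proof.
  revert b; induction a as [|x a IH]; intros [|y b] Hl He; try discriminate; auto.
  inversion He; subst; f_equal; apply IH; auto.
Qed.

Lemma prefix_unique (a b u : str) :
  length a = length b -> prefix a u -> prefix b u -> a = b.
Proof. intros Hl [t ->] [t' E]; exact (app_inv_length a b t t' Hl E). Qed.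

Fixpoint level (m : nat) : list (list bool) :=
  match m with
  | 0 => [[]]
  | S m' => map (cons true) (level m') ++ map (cons false) (level m')
  end.

Lemma level_length m : length (level m) = 2 ^ m.
Proof. induction m as [|m IH]; simpl; rewrite ?length_app, ?length_map, ?IH; lia. Qed.

Lemma in_level m u : In u (level m) <-> length u = m.
Proof.
  revert u; induction m as [|m IH]; intros u; simpl.
  - destruct u; simpl; intuition discriminate.
  - rewrite in_app_iff, !in_map_iff. split.
    + intros [[x [<- Hx]]|[x [<- Hx]]]; simpl; f_equal; apply IH; auto.
    + destruct u as [|[] u]; intros H; try discriminate; injection H as H;
        [left|right]; exists u; split; auto; apply IH; auto.
Qed.

Lemma level_NoDup m : NoDup (level m).
Proof.
  induction m as [|m IH]; simpl; [repeat constructor; auto|].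
  apply NoDup_app; try (apply FinFun.Injective_map_NoDup; auto; intros a b E; now injection E).
  intros a Ha Hb; apply in_map_iff in Ha, Hb.
  destruct Ha as [? [<- _]], Hb as [? [E _]]; discriminate.
Qed.

Lemma is_aut_one : is_aut one.
Proof. repeat split; intros; simpl; eauto. Qed.

Lemma is_aut_inv a : is_aut a -> is_aut (inv a).
Proof.
  intros [H1 [H2 [H3 H4]]].
  assert (L : forall s, length (snd a s) = length s).
  { intro s; rewrite <- (H3 (snd a s)), H2; reflexivity. }
  repeat split; auto; simpl. intros s t.
  set (x := snd a (s ++ t)).
  assert (Lx : length (firstn (length s) x) = length s).
  { rewrite length_firstn; unfold x; rewrite L, length_app; lia. }
  destruct (H4 (firstn (length s) x) (skipn (length s) x)) as [u Hu].
  rewrite firstn_skipn in Hu; unfold x in Hu; rewrite H2 in Hu.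
  assert (E : fst a (firstn (length s) x) = s).
  { symmetry; eapply app_inv_length; [|exact Hu]; rewrite H3; auto. }
  assert (F : firstn (length s) x = snd a s)
    by (rewrite <- (H1 (firstn (length s) x)), E; reflexivity).
  exists (skipn (length s) x); rewrite <- F; symmetry; apply firstn_skipn.
Qed.

Lemma is_aut_mul a b : is_aut a -> is_aut b -> is_aut (mul a b).
Proof.
  intros [A1 [A2 [A3 A4]]] [B1 [B2 [B3 B4]]]; repeat split; intros; simpl.
  - rewrite A1, B1; auto.
  - rewrite B2, A2; auto.
  - rewrite A3, B3; auto.
  - destruct (B4 s t) as [u ->]; apply A4.
Qed.

Lemma is_aut_letter S p : Forall is_aut S -> is_aut (letter S p).
Proof.
  intros HS.
  assert (Hn : is_aut (nth (fst p) S one)).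
  { destruct (Nat.lt_ge_cases (fst p) (length S)).
    - rewrite Forall_forall in HS; apply HS, nth_In; auto.
    - rewrite nth_overflow by auto; apply is_aut_one. }
  unfold letter; destruct (snd p); auto using is_aut_inv.
Qed.

Lemma is_aut_generated S g : Forall is_aut S -> generated S g -> is_aut g.
Proof.
  intros HS [w [_ <-]]; induction w; simpl;
    auto using is_aut_one, is_aut_mul, is_aut_letter.
Qed.

Definition flip (p : nat * bool) : nat * bool := (fst p, negb (snd p)).

Lemma letter_flip S p : letter S (flip p) = inv (letter S p).
Proof. destruct p as [i []]; unfold letter; simpl; [|destruct (nth i S one)]; reflexivity. Qed.

Lemma eval_app T w1 w2 : eval T (w1 ++ w2) = mul (eval T w1) (eval T w2).
Proof.
  induction w1 as [|p w1 IH]; simpl; [destruct (eval T w2)|rewrite IH]; reflexivity.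
Qed.

Lemma generated_one S : generated S one.
Proof. exists []; split; [constructor|reflexivity]. Qed.

Lemma generated_mul S a b : generated S a -> generated S b -> generated S (mul a b).
Proof.
  intros [w1 [V1 <-]] [w2 [V2 <-]]; exists (w1 ++ w2).
  split; [apply Forall_app; auto|apply eval_app].
Qed.

Lemma generated_letter S p : fst p < length S -> generated S (letter S p).
Proof.
  intros Hp; exists [p]; split; [repeat constructor; auto|].
  simpl; destruct (letter S p); reflexivity.
Qed.

Lemma generated_nth S i : i < length S -> generated S (nth i S one).
Proof. apply (generated_letter S (i, true)). Qed.

(** * Rigid stabilizers *)

Definition moves (g : Aut) : Prop := exists u, fst g u <> u.

Lemma moves_of_neq_one g : is_aut g -> g <> one -> moves g.
Proof.
  intros [H1 _] Hg; apply NNPP; intros Hfix; apply Hg.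
  assert (F : forall u, fst g u = u)
    by (intros u; apply NNPP; intros Hu; apply Hfix; exists u; exact Hu).
  destruct g as [a b]; unfold one; simpl in *; f_equal; extensionality u;
    [|rewrite <- (F u) at 1]; auto.
Qed.

Lemma rist_fixes_root z v : is_aut z -> in_rist v z -> fst z v = v.
Proof.
  intros [H1 [_ [H3 _]]] Hz; apply NNPP; intros Hv.
  assert (Np : ~ prefix v (fst z v)).
  { intros [t Et]; apply Hv.
    assert (Lt : length t = 0)
      by (apply (f_equal (@length bool)) in Et; rewrite H3, length_app in Et; lia).
    destruct t; [rewrite app_nil_r in Et; auto|discriminate]. }
  apply Hv; rewrite <- (H1 (fst z v)), (Hz _ Np), H1; reflexivity.
Qed.

Lemma rist_prefix z v u : is_aut z -> in_rist v z -> prefix v u -> prefix v (fst z u).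
Proof.
  intros Hz Hr [t ->]; pose proof Hz as [_ [_ [_ H4]]].
  destruct (H4 v t) as [t' ->]; exists t'; rewrite rist_fixes_root; auto.
Qed.

Lemma rist_conj a z v : is_aut a -> in_rist v z -> in_rist (fst a v) (mul a (mul z (inv a))).
Proof.
  intros [_ [A2 [_ A4]]] Hz u Hu; simpl; rewrite Hz; [apply A2|].
  intros [t Et]; apply Hu; destruct (A4 v t) as [t' Et'].
  exists t'; rewrite <- Et', <- Et, A2; reflexivity.
Qed.

Lemma moves_conj a z : is_aut a -> moves z -> moves (mul a (mul z (inv a))).
Proof.
  intros [A1 _] [u Hu]; exists (fst a u); simpl; rewrite A1.
  intros E; apply Hu; rewrite <- (A1 (fst z u)), E, A1; reflexivity.
Qed.

Definition exact_support (A : list str) (y : Aut) : Prop :=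
  (forall u, (forall a, In a A -> ~ prefix a u) -> fst y u = u) /\
  (forall a, In a A -> exists u, prefix a u /\ fst y u <> u).

Lemma exact_support_nil : exact_support [] one.
Proof. split; [reflexivity|intros a []]. Qed.

Lemma exact_support_mul A y z v :
  is_aut z -> in_rist v z -> moves z -> exact_support A y -> ~ In v A ->
  (forall a, In a A -> length a = length v) -> exact_support (v :: A) (mul y z).
Proof.
  intros Az Rz [u0 Hu0] [Y1 Y2] Hv LA; split.
  - intros u Hu; simpl; rewrite Rz by (intro P; apply (Hu v); simpl; auto).
    apply Y1; intros a Ha; apply Hu; simpl; auto.
  - assert (Below : forall a u, In a A -> prefix a u -> prefix v u -> False).
    { intros a u Ha Pa Pv; apply Hv; rewrite <- (prefix_unique a v u); auto. }
    intros a [<-|Ha].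
    + assert (Pu0 : prefix v u0) by (apply NNPP; intros P; apply Hu0, Rz, P).
      exists u0; split; auto; simpl; rewrite Y1; auto.
      intros b Hb Pb; apply (Below b (fst z u0)); auto; apply rist_prefix; auto.
    + destruct (Y2 a Ha) as [u [Pu Hu]]; exists u; split; auto; simpl.
      rewrite Rz; auto; intros Pv; exact (Below a u Ha Pu Pv).
Qed.

Lemma exact_support_unique A1 A2 y m u :
  exact_support A1 y -> exact_support A2 y ->
  (forall a, In a A1 -> length a = m) -> (forall a, In a A2 -> length a = m) ->
  In u A1 -> In u A2.
Proof.
  intros [_ Y1] [Y2 _] L1 L2 Hu; apply NNPP; intros Nu.
  destruct (Y1 u Hu) as [x [Px Hx]]; apply Hx, Y2.
  intros a Ha Pa; apply Nu; rewrite <- (prefix_unique a u x); auto.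
  rewrite (L2 a Ha), (L1 u Hu); reflexivity.
Qed.

(** * Paths in the product replacement graph *)

Lemma within_refl G k r v : within G k r v v.
Proof. induction r; simpl; auto. Qed.

Lemma within_mono G k r r' v w : r <= r' -> within G k r v w -> within G k r' v w.
Proof. induction 1; simpl; auto. Qed.

Lemma within_trans G k r1 r2 u v w :
  within G k r1 u v -> within G k r2 v w -> within G k (r1 + r2) u w.
Proof.
  revert w; induction r2 as [|r2 IH]; intros w H1 H2; simpl in H2.
  - subst; rewrite Nat.add_0_r; auto.
  - rewrite Nat.add_succ_r; simpl.
    destruct H2 as [H2|[x [H2 H3]]]; [left|right; exists x]; auto.
Qed.

Lemma set_nth_app {A} (l1 l2 : list A) j x :
  set_nth (l1 ++ l2) (length l1 + j) x = l1 ++ set_nth l2 j x.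
Proof. induction l1; simpl; f_equal; auto. Qed.

Section Moves.

Variables (S : list Aut) (K : nat).

Definition padded (y z : Aut) : list Aut := S ++ y :: z :: repeat one K.

Local Notation reach := (within (generated S) (length S + 2 + K)).

Lemma padded_nth i y z : i < length S -> nth i (padded y z) one = nth i S one.
Proof. intros; apply app_nth1; auto. Qed.

Lemma padded_nth_y y z : nth (length S) (padded y z) one = y.
Proof. unfold padded; rewrite app_nth2, Nat.sub_diag; auto. Qed.

Lemma padded_nth_z y z : nth (length S + 1) (padded y z) one = z.
Proof.
  unfold padded; rewrite app_nth2 by lia.
  now replace (length S + 1 - length S) with 1 by lia.
Qed.

Lemma padded_set_y y z x : set_nth (padded y z) (length S) x = padded x z.
Proof.
  unfold padded; rewrite <- (Nat.add_0_r (length S)) at 1.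
  rewrite set_nth_app; reflexivity.
Qed.

Lemma padded_set_z y z x : set_nth (padded y z) (length S + 1) x = padded y x.
Proof. unfold padded; rewrite set_nth_app; reflexivity. Qed.

Lemma padded_vertex y z :
  generated S y -> generated S z -> vertex (generated S) (length S + 2 + K) (padded y z).
Proof.
  intros Hy Hz; split; [|split].
  - unfold padded; rewrite length_app; simpl; rewrite repeat_length; lia.
  - intros x Hx; apply in_app_or in Hx; destruct Hx as [Hx|[<-|[<-|Hx]]]; auto.
    + destruct (In_nth _ _ one Hx) as [i [Hi <-]]; apply generated_nth; auto.
    + apply repeat_spec in Hx; subst; apply generated_one.
  - intros g [w [V <-]]; exists w; split.
    + eapply Forall_impl; [|exact V]; intros p Hp; simpl in *.
      unfold padded; rewrite length_app; lia.
    + induction w as [|p w IH]; simpl; auto; inversion V; subst.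
      rewrite IH by auto; unfold letter; rewrite padded_nth; auto.
Qed.

Lemma reach_step y z y' z' :
  generated S y -> generated S z -> generated S y' -> generated S z' ->
  step (length S + 2 + K) (padded y z) (padded y' z') -> reach 1 (padded y z) (padded y' z').
Proof.
  intros; simpl; right; exists (padded y z); split; auto.
  repeat split; try apply padded_vertex; auto.
Qed.

Lemma reach_mul_z_right y z p : fst p < length S ->
  generated S y -> generated S z -> reach 1 (padded y z) (padded y (mul z (letter S p))).
Proof.
  intros Hp Hy Hz; apply reach_step; auto using generated_mul, generated_letter.
  exists (fst p), (length S + 1); repeat split; try lia.
  rewrite padded_nth_z, padded_nth, !padded_set_z by auto.
  unfold letter; destruct (snd p); auto.
Qed.

Lemma reach_mul_z_left y z p : fst p < length S ->
  generated S y -> generated S z -> reach 1 (padded y z) (padded y (mul (letter S p) z)).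
Proof.
  intros Hp Hy Hz; apply reach_step; auto using generated_mul, generated_letter.
  exists (fst p), (length S + 1); repeat split; try lia.
  rewrite padded_nth_z, padded_nth, !padded_set_z by auto.
  unfold letter; destruct (snd p); auto.
Qed.

Lemma reach_mul_y y z :
  generated S y -> generated S z -> reach 1 (padded y z) (padded (mul y z) z).
Proof.
  intros Hy Hz; apply reach_step; auto using generated_mul.
  exists (length S + 1), (length S); repeat split; try lia.
  rewrite padded_nth_z, padded_nth_y, padded_set_y; auto.
Qed.

Lemma reach_mul_word y z w : valid_word S w -> generated S y -> generated S z ->
  reach (length w) (padded y z) (padded y (mul z (eval S w))).
Proof.
  (* [mul] is associative up to conversion, so no rewriting is needed below. *)
  revert z; induction w as [|p w IH]; intros z Vw Hy Hz; simpl.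
  - destruct z; reflexivity.
  - inversion Vw; subst.
    apply (within_trans _ _ 1 (length w) _ (padded y (mul z (letter S p))));
      auto using reach_mul_z_right, generated_mul, generated_letter.
Qed.

Lemma reach_conj y z p : fst p < length S -> generated S y -> generated S z ->
  reach 2 (padded y z) (padded y (mul (letter S p) (mul z (inv (letter S p))))).
Proof.
  intros Hp Hy Hz; rewrite <- letter_flip.
  apply (within_trans _ _ 1 1 _ (padded y (mul z (letter S (flip p)))));
    auto using reach_mul_z_right, reach_mul_z_left, generated_mul, generated_letter.
Qed.

End Moves.

(** * Walks in the Schreier graph of a level *)

Section Schreier.

Variable S : list Aut.
Hypothesis HS : Forall is_aut S.

Definition act (p : nat * bool) (u : str) : str := fst (letter S p) u.

Fixpoint visited (W : list (nat * bool)) (v : str) : list str :=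
  match W with [] => [v] | p :: W' => v :: visited W' (act p v) end.

Fixpoint endpoint (W : list (nat * bool)) (v : str) : str :=
  match W with [] => v | p :: W' => endpoint W' (act p v) end.

Lemma act_length p u : length (act p u) = length u.
Proof. apply (is_aut_letter S p HS). Qed.

Lemma act_flip p u : act (flip p) (act p u) = u.
Proof. unfold act; rewrite letter_flip; apply (is_aut_letter S p HS). Qed.

Lemma endpoint_app W1 W2 v : endpoint (W1 ++ W2) v = endpoint W2 (endpoint W1 v).
Proof. revert v; induction W1; simpl; auto. Qed.

Lemma eval_endpoint w v : fst (eval S w) v = endpoint (rev w) v.
Proof. induction w; simpl; auto; rewrite endpoint_app, <- IHw; reflexivity. Qed.

Lemma in_visited_app W1 W2 v x :
  In x (visited (W1 ++ W2) v) <-> In x (visited W1 v) \/ In x (visited W2 (endpoint W1 v)).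
Proof. revert v; induction W1; intros v; simpl; [destruct W2|rewrite IHW1]; simpl; tauto. Qed.

Lemma visited_start W v : In v (visited W v).
Proof. destruct W; simpl; auto. Qed.

Lemma visited_split W v a : In a (visited W v) ->
  exists W1 W2, W = W1 ++ W2 /\ endpoint W1 v = a.
Proof.
  revert v; induction W as [|p W IH]; intros v [<-|Ha].
  - exists [], []; auto.
  - destruct Ha.
  - exists [], (p :: W); auto.
  - destruct (IH _ Ha) as [W1 [W2 [-> E]]]; exists (p :: W1), W2; auto.
Qed.

Lemma word_exits (V : list str) W v : valid_word S W ->
  In v V -> ~ In (endpoint W v) V ->
  exists a p, In a V /\ fst p < length S /\ ~ In (act p a) V.
Proof.
  intros VW; revert v; induction VW as [|p W Hp VW IH]; intros v Hv He; simpl in *.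
  - contradiction.
  - destruct (classic (In (act p v) V)); [eapply IH|exists v, p]; eauto.
Qed.

(** A detour [p, p^-1] from a visited vertex reaches one more vertex. *)
Lemma walk_extends m s0 W : level_transitive (generated S) -> length s0 = m ->
  valid_word S W -> ~ incl (level m) (visited W s0) ->
  exists W' b, valid_word S W' /\ length W' = length W + 2 /\ ~ In b (visited W s0) /\
    incl (b :: visited W s0) (visited W' s0).
Proof.
  intros HT Hs0 VW Hnot.
  destruct (not_all_ex_not _ _ Hnot) as [b Hb]; apply imply_to_and in Hb.
  destruct Hb as [Hb Nb]; apply in_level in Hb.
  destruct (HT m s0 b Hs0 Hb) as [g [[w [Vw <-]] Eg]]; rewrite eval_endpoint in Eg.
  destruct (word_exits (visited W s0) (rev w) s0) as [a [p [Ha [Hp Hc]]]];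
    [apply Forall_rev; auto|apply visited_start|rewrite Eg; auto|].
  destruct (visited_split W s0 a Ha) as [W1 [W2 [-> Ea]]].
  apply Forall_app in VW; destruct VW.
  exists (W1 ++ p :: flip p :: W2), (act p a); repeat split.
  - apply Forall_app; repeat constructor; auto.
  - rewrite !length_app; simpl; lia.
  - exact Hc.
  - intros x [<-|Hx]; apply in_visited_app.
    + right; rewrite Ea; simpl; auto.
    + apply in_visited_app in Hx; destruct Hx as [Hx|Hx]; [left; auto|right].
      rewrite Ea in *; simpl; rewrite act_flip; auto.
Qed.

Lemma walk_covers m s0 N : level_transitive (generated S) -> length s0 = m ->
  N + 1 <= 2 ^ m ->
  exists W D, valid_word S W /\ length W <= 2 * N /\ NoDup D /\ N + 1 <= length D /\
    incl D (visited W s0).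
Proof.
  intros HT Hs0; induction N as [|N IH]; intros HN.
  - exists [], [s0]; repeat split; simpl; auto; [constructor|repeat constructor; auto|].
    intros x Hx; auto.
  - destruct IH as [W [D [VW [LW [ND [LD ID]]]]]]; [lia|].
    destruct (classic (incl (level m) (visited W s0))) as [All|Not].
    + exists W, (level m); rewrite level_length; repeat split; auto using level_NoDup; lia.
    + destruct (walk_extends m s0 W HT Hs0 VW Not) as [W' [b [VW' [LW' [Nb Ib]]]]].
      exists W', (b :: D); repeat split; simpl; auto; try lia.
      * constructor; auto.
      * intros x [<-|Hx]; apply Ib; simpl; auto.
Qed.

End Schreier.

(** * Recording a chosen set of vertices in the register *)

Section Register.

Variables (S : list Aut) (K m : nat) (f : str -> bool).
Hypothesis HS : Forall is_aut S.

Local Notation reach := (within (generated S) (length S + 2 + K)).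

Definition nontrivial_rist (v : str) (z : Aut) : Prop :=
  generated S z /\ in_rist v z /\ moves z.

Definition admissible (y : Aut) (A : list str) : Prop :=
  generated S y /\ exact_support A y /\
  (forall a, In a A -> length a = m) /\ (forall a, In a A -> f a = true).

Lemma admissible_nil : admissible one [].
Proof. repeat split; auto using generated_one, exact_support_nil; intros a []. Qed.

Lemma reach_record y z v A : length v = m -> nontrivial_rist v z -> admissible y A ->
  exists y' A', reach 1 (padded S K y z) (padded S K y' z) /\ admissible y' A' /\
    forall u, In u A' <-> In u A \/ (u = v /\ f u = true).
Proof.
  intros Lv [Gz [Rz Mz]] Hy; pose proof Hy as [Gy [Ey [LA FA]]].
  destruct (f v) eqn:Fv; [destruct (classic (In v A)) as [Iv|Iv]|].
  - exists y, A; split; [apply within_refl|split; auto].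
    intros u; split; [auto|intros [?|[-> _]]; auto].
  - exists (mul y z), (v :: A); split; [apply reach_mul_y; auto|split].
    + split; [apply generated_mul; auto|split; [|split]].
      * apply exact_support_mul; eauto using is_aut_generated.
        intros a Ha; rewrite LA, Lv; auto.
      * intros a [<-|Ha]; auto.
      * intros a [<-|Ha]; auto.
    + intros u; simpl; split; [intros [<-|?]; auto|intros [?|[-> _]]; auto].
  - exists y, A; split; [apply within_refl|split; auto].
    intros u; split; [auto|intros [?|[-> Fu]]; auto; congruence].
Qed.

Lemma reach_transport y z v p : fst p < length S -> generated S y -> nontrivial_rist v z ->
  exists z', reach 2 (padded S K y z) (padded S K y z') /\ nontrivial_rist (act S p v) z'.
Proof.
  intros Hp Gy [Gz [Rz Mz]]; assert (Ap := is_aut_letter S p HS).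
  eexists; split; [apply (reach_conj S K y z p); auto|].
  split; [|split; [apply rist_conj|apply moves_conj]; auto].
  apply generated_mul; [apply generated_letter; auto|].
  rewrite <- letter_flip; apply generated_mul; auto; apply generated_letter; auto.
Qed.

Lemma reach_record_along W v z y A : valid_word S W -> length v = m ->
  nontrivial_rist v z -> admissible y A ->
  exists y' z' A', reach (3 * length W + 1) (padded S K y z) (padded S K y' z') /\
    admissible y' A' /\
    forall u, In u A' <-> In u A \/ (In u (visited S W v) /\ f u = true).
Proof.
  intros VW; revert v z y A; induction VW as [|p W Hp VW IH];
    intros v z y A Lv Hz Hy;
    destruct (reach_record y z v A Lv Hz Hy) as [y1 [A1 [R1 [Hy1 I1]]]].
  - exists y1, z, A1; split; [exact R1|split; [exact Hy1|]].
    intros u; rewrite I1; simpl; intuition.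
  - destruct (reach_transport y1 z v p Hp (proj1 Hy1) Hz) as [z2 [R2 Hz2]].
    assert (L2 : length (act S p v) = m) by (rewrite act_length; auto).
    destruct (IH _ _ _ _ L2 Hz2 Hy1) as [y' [z' [A' [R3 [Hy' I']]]]].
    exists y', z', A'; split; [|split; auto].
    + replace (3 * length (p :: W) + 1) with (1 + 2 + (3 * length W + 1)) by (simpl; lia).
      apply (within_trans _ _ _ _ _ (padded S K y1 z2)); [|exact R3].
      apply (within_trans _ _ _ _ _ (padded S K y1 z)); assumption.
    + intros u; rewrite I', I1; simpl; intuition; subst; auto.
Qed.

End Register.

Definition str_eq_dec : forall a b : str, {a = b} + {a <> b} := list_eq_dec Bool.bool_dec.

Definition memb (C : list str) (u : str) : bool := if in_dec str_eq_dec u C then true else false.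

Lemma memb_true C u : memb C u = true <-> In u C.
Proof. unfold memb; destruct (in_dec str_eq_dec u C); split; auto; discriminate. Qed.

Fixpoint select (D : list str) (ds : list bool) : list str :=
  match D, ds with
  | d :: D', b :: ds' => if b then d :: select D' ds' else select D' ds'
  | _, _ => []
  end.

Lemma select_incl D ds : incl (select D ds) D.
Proof.
  revert ds; induction D as [|d D IH]; intros [|[] ds] x; simpl; try tauto.
  - intros [<-|Hx]; [left|right; eapply IH]; eauto.
  - intros Hx; right; eapply IH; eauto.
Qed.

Lemma select_separates D ds ds' : NoDup D -> length ds = length D -> length ds' = length D ->
  ds <> ds' -> exists u, ~ (In u (select D ds) <-> In u (select D ds')).
Proof.
  revert ds ds'; induction D as [|d D IH]; intros [|b ds] [|b' ds'] ND L L' Ne;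
    simpl in L, L'; try discriminate; try (contradict Ne; reflexivity).
  inversion ND as [|? ? Nd ND']; subst.
  assert (Out : forall es, ~ In d (select D es))
    by (intros es Hd; apply Nd, (select_incl D es), Hd).
  destruct (Bool.bool_dec b b') as [<-|Nb].
  - destruct (IH ds ds' ND') as [u Hu]; try lia; [congruence|].
    assert (Hud : d <> u) by (intros ->; apply Hu; split; intros H; exfalso; eapply Out; eauto).
    exists u; destruct b; simpl; [|exact Hu].
    intros E; apply Hu; split; intros H.
    + destruct (proj1 E (or_intror H)) as [E'|H']; [contradiction|exact H'].
    + destruct (proj2 E (or_intror H)) as [E'|H']; [contradiction|exact H'].
  - exists d; destruct b, b'; simpl; try congruence; intros E;
      [apply (Out ds'), E|apply (Out ds), E]; left; reflexivity.
Qed.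

Lemma NoDup_images {X Y : Type} (D : list X) (P : X -> Y -> Prop) : NoDup D ->
  (forall x, In x D -> exists y, P x y) ->
  (forall x x' y, In x D -> In x' D -> x <> x' -> P x y -> P x' y -> False) ->
  exists l, NoDup l /\ length l = length D /\ forall y, In y l -> exists x, In x D /\ P x y.
Proof.
  induction D as [|d D IH]; intros ND Ex Dis.
  - exists []; repeat split; [constructor|intros y []].
  - inversion ND as [|? ? Nd ND']; subst.
    destruct IH as [l [Nl [Ll Il]]];
      [exact ND'|intros; apply Ex; simpl; auto|intros x x' y ? ? ?; apply Dis; simpl; auto|].
    destruct (Ex d) as [y0 Py0]; [simpl; auto|].
    exists (y0 :: l); repeat split; simpl; auto.
    + constructor; auto; intros Hy; destruct (Il y0 Hy) as [x [Hx Px]].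
      apply (Dis d x y0); simpl; auto; intros ->; contradiction.
    + intros y [<-|Hy]; [exists d; auto|destruct (Il y Hy) as [x [? ?]]; exists x; auto].
Qed.

Lemma ball_count S K m s g w : Forall is_aut S -> level_transitive (generated S) ->
  length s = m -> in_rist s g -> g <> one -> valid_word S w -> eval S w = g ->
  exists l, NoDup l /\ 2 ^ (2 ^ m) <= length l /\
    forall T, In T l ->
      within (generated S) (length S + 2 + K) (length w + 6 * 2 ^ m) (padded S K one one) T.
Proof.
  intros HS HT Ls Rg Ng Vw Ew.
  assert (Gg : generated S g) by (exists w; auto).
  assert (Hz : nontrivial_rist S s g)
    by (split; [|split; [|apply moves_of_neq_one]]; eauto using is_aut_generated).
  assert (Rz : within (generated S) (length S + 2 + K) (length w) (padded S K one one)
                 (padded S K one g)).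
  { replace (padded S K one g) with (padded S K one (mul one (eval S w)))
      by (rewrite Ew; destruct g; reflexivity).
    apply reach_mul_word; auto using generated_one. }
  assert (P2 : 2 ^ m <> 0) by (apply Nat.pow_nonzero; lia).
  destruct (walk_covers S HS m s (2 ^ m - 1) HT Ls) as [W [D [VW [LW [ND [LD ID]]]]]]; [lia|].
  set (Reg := fun ds T => exists y z A, T = padded S K y z /\
    admissible S m (memb (select D ds)) y A /\ (forall u, In u A <-> In u (select D ds)) /\
    within (generated S) (length S + 2 + K) (length w + 6 * 2 ^ m) (padded S K one one) T).
  destruct (NoDup_images (level (length D)) Reg (level_NoDup _)) as [l [Nl [Ll Il]]].
  - intros ds _.
    destruct (reach_record_along S K m (memb (select D ds)) HS W s g one [] VW Ls
      Hz (admissible_nil S m _)) as [y [z [A [R [Hy IA]]]]].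
    exists (padded S K y z), y, z, A; split; [reflexivity|split; [exact Hy|split]].
    + intros u; rewrite IA, memb_true; simpl; split; [tauto|].
      intros Hu; right; split; [apply ID, (select_incl D ds)|]; exact Hu.
    + eapply within_mono; [|eapply within_trans; [exact Rz|exact R]]; lia.
  - intros ds ds' T Hd Hd' Ne [y [z [A [-> [[_ [Ey [LA _]]] [IA _]]]]]]
      [y' [z' [A' [E [[_ [Ey' [LA' _]]] [IA' _]]]]]].
    apply in_level in Hd, Hd'.
    destruct (select_separates D ds ds' ND Hd Hd' Ne) as [u Hu].
    assert (y' = y) as -> by
      (rewrite <- (padded_nth_y S K y z), <- (padded_nth_y S K y' z'), E; reflexivity).
    apply Hu; rewrite <- IA, <- IA'; split; eapply exact_support_unique; eauto.
  - exists l; repeat split; auto.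
    + rewrite Ll, level_length; apply Nat.pow_le_mono_r; lia.
    + intros T HTl; destruct (Il T HTl) as [ds [_ [y [z [A [_ [_ [_ WT]]]]]]]]; auto.
Qed.

(** * From doubly exponential balls to exponential growth *)

Lemma nat_above (x : R) : exists c : nat, (x <= INR c)%R.
Proof.
  exists (Z.to_nat (up x)); destruct (archimed x) as [A _].
  destruct (Z.lt_ge_cases (up x) 0) as [Hz|Hz].
  - apply IZR_lt in Hz; pose proof (pos_INR (Z.to_nat (up x))); lra.
  - rewrite INR_IZR_INZ, Z2Nat.id by auto; lra.
Qed.

Lemma root_of_two (c : nat) : 1 <= c -> exists beta : R, (1 < beta)%R /\ (beta ^ c = 2)%R.
Proof.
  intros Hc; assert (Xpos : (0 < INR c)%R) by (apply lt_0_INR; lia).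
  exists (Rpower 2 (/ INR c)); split.
  - rewrite <- (Rpower_O 2) at 1 by lra; apply Rpower_lt; [lra|]; apply Rinv_0_lt_compat; auto.
  - rewrite <- Rpower_pow by (unfold Rpower; apply exp_pos).
    rewrite Rpower_mult, Rinv_l by lra; apply Rpower_1; lra.
Qed.

Lemma dyadic_scale c r : 1 <= c -> 2 * c <= r ->
  exists m, 1 <= m /\ c * 2 ^ m <= r <= 2 * c * 2 ^ m.
Proof.
  intros Hc Hr; set (q := r / c).
  assert (Q1 : c * q <= r) by (apply Nat.Div0.mul_div_le; lia).
  assert (Q2 : r < c * (q + 1)).
  { pose proof (Nat.div_mod_eq r c); pose proof (Nat.mod_upper_bound r c); unfold q; lia. }
  assert (Q3 : 2 <= q) by nia.
  destruct (Nat.log2_spec q) as [M1 M2]; [lia|].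
  exists (Nat.log2 q); repeat split.
  - apply Nat.log2_le_pow2; simpl; lia.
  - apply (Nat.le_trans _ (c * q)); auto; apply Nat.mul_le_mono_l; auto.
  - rewrite Nat.pow_succ_r' in M2; nia.
Qed.

Lemma exp_growth_of_dyadic_balls (G : Aut -> Prop) k v (c : nat) : 1 <= c ->
  (forall m, 1 <= m -> exists l, NoDup l /\ 2 ^ (2 ^ m) <= length l /\
     forall T, In T l -> within G k (c * 2 ^ m) v T) ->
  exists beta : R, (1 < beta)%R /\ exists R0 : nat, forall r, R0 <= r ->
    exists l, NoDup l /\ (forall T, In T l -> within G k r v T) /\ (beta ^ r <= INR (length l))%R.
Proof.
  intros Hc Hballs; destruct (root_of_two (2 * c)) as [beta [B1 B2]]; [lia|].
  exists beta; split; auto; exists (2 * c); intros r Hr.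
  destruct (dyadic_scale c r Hc Hr) as [m [Hm [R1 R2]]].
  destruct (Hballs m Hm) as [l [Nl [Ll Wl]]].
  exists l; split; [auto|split].
  - intros T HT; eapply within_mono; [exact R1|auto].
  - apply (Rle_trans _ (beta ^ (2 * c * 2 ^ m))); [apply Rle_pow; lra || auto|].
    rewrite pow_mult, B2; apply (Rle_trans _ (INR (2 ^ 2 ^ m))); [|apply le_INR; auto].
    rewrite pow_INR; right; f_equal; simpl; lra.
Qed.

Theorem lemma4p1 (n : nat) (S : list Aut) (G : Aut -> Prop) :
  length S = n ->
  Forall is_aut S ->
  (forall g, G g <-> generated S g) ->
  level_transitive G ->
  (exists alpha : R, forall m : nat, 1 <= m ->
     exists s : str, length s = m /\
       exists g, G g /\ in_rist s g /\ g <> one /\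
         word_length_le S g (alpha * 2 ^ m)%R) ->
  forall k : nat, n + 2 <= k ->
    component_exp_growth G k (S ++ repeat one (k - n)).
Proof.
  intros <- HS HG HT [alpha Halpha] k Hk.
  assert (EG : G = generated S)
    by (extensionality g; apply propositional_extensionality; auto).
  subst G.
  set (K := k - length S - 2).
  replace (k - length S) with (2 + K) by lia.
  replace k with (length S + 2 + K) by lia.
  destruct (nat_above (alpha + 6)) as [c Hc].
  exists (padded S K one one); split; [apply padded_vertex; apply generated_one|].
  split; [exists 0; reflexivity|].
  apply (exp_growth_of_dyadic_balls _ _ _ (c + 1)); [lia|intros m Hm].
  destruct (Halpha m Hm) as [s [Ls [g [_ [Rg [Ng [w [Vw [Lw Ew]]]]]]]]].
  destruct (ball_count S K m s g w HS HT Ls Rg Ng Vw Ew) as [l [Nl [Ll Wl]]].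
  exists l; repeat split; auto; intros T HTl; eapply within_mono; [|apply Wl; auto].
  assert (E2 : INR (2 ^ m) = (2 ^ m)%R) by (rewrite pow_INR; f_equal; simpl; lra).
  assert (P : (0 <= 2 ^ m)%R) by (apply pow_le; lra).
  apply INR_le; rewrite plus_INR, !mult_INR, plus_INR, E2; simpl INR.
  nra.
Qed.
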